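(* Fix $f\in\mathbb{N}$ and $\ell=f+1$. For a family of directed graphs $G=(V,E)$ with $n=|V|\to\infty$, consider the reinforcement $V'=V\times[\ell]$, $P(v_i)=v$, $E'=\{(v',w'):(P(v'),P(w'))\in E\}$, with $A'$ defined from $A$ by: every $v'$ initializes copies of the state variables of $P(v')$, sends on each $(v',w')\in E'$ the message $P(v')$ would send on $(P(v'),P(w'))$ under $A$, and updates its state as if $P(v')$ received from each in-neighbor $w$ the unique message sent to $v'$ by some copy of $w$. Let $F'\subseteq V'$ contain each node independently with probability $p=p(n)$, faulty nodes suffering omission faults. (a) If $p\in o(n^{-1/(f+1)})$, then with probability $1-o(1)$ no $v\in V$ has all its $\ell$ copies in $F'$, and consequently $A'$ strongly simulates $A$ with probability $1-o(1)$, i.e., the reinforcement is a valid strong reinforcement under $\mathrm{Om}(p)$. (b) If $G$ contains $\Omega(n)$ nodes with non-zero outdegree and $p\in\omega(n^{-1/(f+1)})$, then with probability $1-o(1)$ all copies of some node with non-zero outdegree are faulty, and the reinforcement is not valid.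
   Context: Networks are synchronous directed graphs running a scheduling algorithm $A$ (each round: send messages on outgoing links based on state, then update state from received messages and environment input). $\mathrm{Om}(p)$: each node of $V'$ is independently faulty with probability $p$; faulty nodes may omit sending messages they should send but otherwise follow the protocol. Strong simulation under $\mathrm{Om}(p)$: assuming each $v'\in V'$ receives the same environment input as $P(v')$, every $v'\in V'$ computes in each round the state of $P(v')$ in the fault-free execution of $A$. A reinforcement is valid if $A'$ is a (strong) simulation of $A$ with probability $1-o(1)$ as $n\to\infty$ ($f$ fixed). *)

From Stdlib Require Import Reals ClassicalEpsilon.
From HB Require Import structures.
From mathcomp Require Import all_boot.

Set Implicit Arguments.
Unset Strict Implicit.
Unset Printing Implicit Defensive.

(* A synchronous algorithm on node set V, with state type S, message type M,
   environment-input type I.  In each round every node v sends to each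
   out-neighbour w the message [alg_send v s w] (s = current state of v), then
   updates its state from its current state, the messages received (a function
   giving, for each potential sender, [Some m] if m was received from it and
   [None] otherwise) and its environment input of that round. *)
Record algorithm (V : finType) (S M I : Type) := Algorithm {
  alg_init   : V -> S;
  alg_send   : V -> S -> V -> M;
  alg_update : V -> S -> (V -> option M) -> I -> S }.

(* Execution of [A] on the directed graph [G] (edge (w,v) iff [G w v]) with
   faulty set [F] under omission faults: [om r w v] says whether faulty node w
   omits its round-r message to v (only effective if w \in F).
   [exec_om ... r v] is the state of v after r rounds. *)
Fixpoint exec_om (V : finType) (S M I : Type) (G : rel V)
    (A : algorithm V S M I) (F : {set V}) (om : nat -> V -> V -> bool)
    (inp : nat -> V -> I) (r : nat) : V -> S :=
  match r with
  | 0 => alg_init A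
  | r'.+1 => fun v =>
      let st := exec_om G A F om inp r' in
      alg_update A v (st v)
        (fun w => if G w v && ~~ ((w \in F) && om r' w v)
                  then Some (alg_send A w (st w) v) else None)
        (inp r' v)
  end.

Definition exec (V : finType) (S M I : Type) (G : rel V)
    (A : algorithm V S M I) (inp : nat -> V -> I) : nat -> V -> S :=
  exec_om G A set0 (fun _ _ _ => false) inp.

Definition reinf_graph {V : finType} (l : nat) (G : rel V) : rel (V * 'I_l)%type :=
  fun x y => G x.1 y.1.
Arguments reinf_graph {V} l G _ _.

Definition pick_msg {l : nat} {M : Type} (g : 'I_l -> option M) : option M :=
  foldr (fun j acc => if g j is Some m then Some m else acc) None (enum 'I_l).

Definition reinforce {V : finType} {S M I : Type} (l : nat)
    (A : algorithm V S M I) : algorithm (V * 'I_l)%type S M I :=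
  Algorithm
    (fun x => alg_init A x.1)
    (fun x s y => alg_send A x.1 s y.1)
    (fun x s rcv i =>
       alg_update A x.1 s (fun w => pick_msg (fun j => rcv (w, j))) i).
Arguments reinforce {V S M I} l A.

Definition strongly_simulates (V : finType) (S M I : Type) (l : nat)
    (G : rel V) (A : algorithm V S M I) (F : {set (V * 'I_l)%type}) : Prop :=
  forall (inp : nat -> V -> I) (om : nat -> (V * 'I_l)%type -> (V * 'I_l)%type -> bool)
         (r : nat) (x : (V * 'I_l)%type),
    exec_om (reinf_graph l G) (reinforce l A) F om (fun r x => inp r x.1) r x
    = exec G A inp r x.1.

(* Probability of an event E (on faulty sets) when each element of T is
   faulty independently with probability p. *)
Definition prob (T : finType) (p : R) (E : {set T} -> Prop) : R :=
  \big[Rplus/R0]_(F : {set T})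
     (if excluded_middle_informative (E F)
      then Rmult (pow p #|F|) (pow (Rminus R1 p) (#|T| - #|F|)) else R0).

From Stdlib Require Import Reals Lra Lia Classical ClassicalEpsilon FunctionalExtensionality.
From HB Require Import structures.
From mathcomp Require Import all_boot zify.

(* Fault events are independent across the original nodes: the probability that no
   node of a set W has all of its l copies faulty factors as (1 - p^l)^|W|.  With
   u = p n^(1/l) we have n p^l = u^l, so (1 - p^l)^n lies between 1 - u^l and 1 when
   u -> 0, while (1 - p^l)^(c n) <= exp (-c u^l) -> 0 when u -> oo.  If every original
   node keeps a correct copy, the copies of each in-neighbour deliver exactly the
   fault-free messages, so the reinforcement simulates A; if all copies of a node with
   an out-neighbour are silent, an algorithm that records its senders tells the two
   executions apart. *)

Set Implicit Arguments.
Unset Strict Implicit.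
Unset Printing Implicit Defensive.

Open Scope R_scope.

Lemma Rplus_associative : associative Rplus. Proof. by move=> x y z; rewrite Rplus_assoc. Qed.
Lemma Rmult_associative : associative Rmult. Proof. by move=> x y z; rewrite Rmult_assoc. Qed.
HB.instance Definition _ :=
  Monoid.isComLaw.Build R R0 Rplus Rplus_associative Rplus_comm Rplus_0_l.
HB.instance Definition _ :=
  Monoid.isComLaw.Build R R1 Rmult Rmult_associative Rmult_comm Rmult_1_l.
HB.instance Definition _ := Monoid.isMulLaw.Build R R0 Rmult Rmult_0_l Rmult_0_r.
HB.instance Definition _ :=
  Monoid.isAddLaw.Build R Rmult Rplus Rmult_plus_distr_r Rmult_plus_distr_l.

Lemma iter_Rmult_pow (c : R) (k : nat) : iter k (Rmult c) R1 = c ^ k.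
Proof. by elim: k => //= k ->. Qed.

Lemma big_set_prod (T : finType) (a b : T -> R) :
  \big[Rplus/R0]_(F : {set T}) \big[Rmult/R1]_(t : T) (if t \in F then a t else b t)
  = \big[Rmult/R1]_(t : T) (a t + b t).
Proof.
rewrite (eq_bigr (fun t => \big[Rplus/R0]_(x : bool) (if x then a t else b t)));
  last by move=> t _; rewrite big_bool.
rewrite bigA_distr_bigA (reindex (fun phi : {ffun T -> bool} => [set t | phi t])).
  by apply: eq_bigr => phi _; apply: eq_bigr => t _; rewrite inE.
exists (fun F : {set T} => [ffun t => t \in F]).
  by move=> phi _; apply/ffunP => t; rewrite ffunE inE.
by move=> F _; apply/setP => t; rewrite inE ffunE.
Qed.

Definition slice (V I : finType) (F : {set V * I}) (v : V) : {set I} :=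
  [set i | (v, i) \in F].

Lemma big_set_pair_prod (V I : finType) (g : V -> {set I} -> R) :
  \big[Rplus/R0]_(F : {set V * I}) \big[Rmult/R1]_(v : V) g v (slice F v)
  = \big[Rmult/R1]_(v : V) \big[Rplus/R0]_(S : {set I}) g v S.
Proof.
rewrite bigA_distr_bigA.
rewrite (reindex (fun phi : {ffun V -> {set I}} => [set x | x.2 \in phi x.1])).
  apply: eq_bigr => phi _; apply: eq_bigr => v _; congr (g v _).
  by apply/setP => i; rewrite !inE.
exists (fun F : {set V * I} => [ffun v => slice F v]).
  by move=> phi _; apply/ffunP => v; rewrite ffunE; apply/setP => i; rewrite !inE.
by move=> F _; apply/setP => -[v i]; rewrite !inE ffunE inE.
Qed.

Section ProductMeasure.

Variable p : R.

Definition wt (T : finType) (F : {set T}) : R :=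
  p ^ #|F| * (1 - p) ^ (#|T| - #|F|).
Arguments wt {T} F.

Lemma wtE (T : finType) (F : {set T}) :
  wt F = \big[Rmult/R1]_(t : T) (if t \in F then p else 1 - p).
Proof.
rewrite (bigID (mem F)) /= (eq_bigr (fun _ => p)); last by move=> t ->.
rewrite [X in _ = _ * X](eq_bigr (fun _ => 1 - p)); last by move=> t /negbTE ->.
by rewrite !big_const !iter_Rmult_pow /wt -(cardC (mem F)) addKn.
Qed.

Lemma wt_slice (V I : finType) (F : {set V * I}) :
  wt F = \big[Rmult/R1]_(v : V) wt (slice F v).
Proof.
rewrite wtE (eq_bigr (fun t => if (t.1, t.2) \in F then p else 1 - p)); last by case.
rewrite -(pair_bigA _ (fun v i => if (v, i) \in F then p else 1 - p)).
by apply: eq_bigr => v _; rewrite wtE; apply: eq_bigr => i _; rewrite inE.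
Qed.

Lemma sum_wt (T : finType) : \big[Rplus/R0]_(F : {set T}) wt F = 1.
Proof.
rewrite (eq_bigr _ (fun F _ => wtE F)) big_set_prod big1 // => t _; lra.
Qed.

Lemma probE (T : finType) (E : {set T} -> Prop) (B : pred {set T}) :
  (forall F, E F <-> B F) ->
  prob p E = \big[Rplus/R0]_(F : {set T}) (if B F then wt F else 0).
Proof.
move=> EB; apply: eq_bigr => F _.
case: excluded_middle_informative => [/EB -> // | notE].
by case: (boolP (B F)) => // /EB.
Qed.

Lemma eq_prob (T : finType) (E E' : {set T} -> Prop) :
  (forall F, E F <-> E' F) -> prob p E = prob p E'.
Proof.
move=> EE'; apply: eq_bigr => F _.
case: excluded_middle_informative => e; case: excluded_middle_informative => // e'.
  by case: e'; apply/EE'.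
by case: e; apply/EE'.
Qed.

Lemma prob_True (T : finType) : prob p (fun _ : {set T} => True) = 1.
Proof.
rewrite (probE (B := predT)) // -(sum_wt T).
by apply: eq_bigr.
Qed.

Lemma prob_Not (T : finType) (E : {set T} -> Prop) :
  prob p (fun F => ~ E F) = 1 - prob p E.
Proof.
suff : prob p E + prob p (fun F => ~ E F) = 1 by lra.
rewrite -(prob_True T) /prob -big_split; apply: eq_bigr => F _ /=.
case: (excluded_middle_informative (E F)) => e;
  case: (excluded_middle_informative (~ E F)) => ne;
  case: (excluded_middle_informative True) => // _ /=; try tauto; lra.
Qed.

Lemma prob_eq_setT (T : finType) : prob p (fun S : {set T} => S = setT) = p ^ #|T|.
Proof.
rewrite (probE (B := pred1 setT)); last by move=> F; split => [-> | /eqP]; rewrite /= ?eqxx.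
by rewrite -big_mkcond big_pred1_eq /wt cardsT subnn /= Rmult_1_r.
Qed.

Lemma prob_forall_slice (V I : finType) (B : V -> pred {set I}) :
  prob p (fun F : {set V * I} => forall v, B v (slice F v))
  = \big[Rmult/R1]_(v : V) prob p (fun S : {set I} => B v S).
Proof.
rewrite (probE (B := fun F => [forall v, B v (slice F v)]));
  last by move=> F; split => /forallP.
rewrite (eq_bigr (fun F => \big[Rmult/R1]_(v : V)
                              (if B v (slice F v) then wt (slice F v) else 0))).
  rewrite (big_set_pair_prod (fun v S => if B v S then wt S else 0)).
  by apply: eq_bigr => v _; rewrite (probE (B := B v)).
move=> F _; rewrite wt_slice.
case: (boolP [forall v, _]) => [/forallP allB | /forallPn [v notB]].
  by apply: eq_bigr => v _; rewrite allB.
by rewrite (bigD1 v) //= (negbTE notB) Rmult_0_l.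
Qed.

Lemma slice_neqT (V I : finType) (F : {set V * I}) (v : V) :
  slice F v != setT <-> exists i, (v, i) \notin F.
Proof.
rewrite -subTset; split => [/subsetPn [i _] | [i nFi]]; first by rewrite inE; exists i.
by apply/subsetPn; exists i; rewrite ?inE.
Qed.

Lemma prob_no_full_slice (V I : finType) (W : {set V}) :
  prob p (fun F : {set V * I} => forall v, v \in W -> exists i, (v, i) \notin F)
  = (1 - p ^ #|I|) ^ #|W|.
Proof.
rewrite (eq_prob (E' := fun F => forall v, (v \in W) ==> (slice F v != setT))); last first.
  move=> F; split=> [noFull v | noFull v vW].
    by apply/implyP => /noFull /slice_neqT.
  by apply/slice_neqT; move/implyP: (noFull v); apply.
rewrite (prob_forall_slice (fun v S => (v \in W) ==> (S != setT))).
rewrite (eq_bigr (fun v => if v \in W then 1 - p ^ #|I| else 1)).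
  by rewrite -big_mkcond big_const iter_Rmult_pow.
move=> v _; case: (v \in W) => /=.
  by rewrite -prob_eq_setT -prob_Not; apply: eq_prob => S; split => /eqP.
by rewrite -(prob_True I); apply: eq_prob.
Qed.

Hypothesis p01 : 0 <= p <= 1.

Lemma prob_le (T : finType) (E E' : {set T} -> Prop) :
  (forall F, E F -> E' F) -> prob p E <= prob p E'.
Proof.
move=> EE'; apply: (big_ind2 Rle); [lra | by move=> *; lra | move=> F _].
have wt_ge0 : 0 <= wt F by apply: Rmult_le_pos; apply: pow_le; lra.
case: (excluded_middle_informative (E F)) => e;
  case: (excluded_middle_informative (E' F)) => e' //=; try lra.
by case: e'; apply: EE'.
Qed.

Lemma prob_le1 (T : finType) (E : {set T} -> Prop) : prob p E <= 1.
Proof. by rewrite -(prob_True T); apply: prob_le. Qed.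

End ProductMeasure.

Lemma Un_cv_const (c : R) : Un_cv (fun _ => c) c.
Proof. by move=> eps heps; exists 0%nat => n _; rewrite Rdist_eq. Qed.

Lemma Un_cv_squeeze (a b c : nat -> R) (L : R) (N : nat) :
  (forall n, (N <= n)%nat -> a n <= b n <= c n) ->
  Un_cv a L -> Un_cv c L -> Un_cv b L.
Proof.
move=> abc cva cvc eps heps.
have [Na hNa] := cva eps heps; have [Nc hNc] := cvc eps heps.
exists (maxn N (maxn Na Nc)) => n hn.
have := abc n ltac:(lia); have := hNa n ltac:(lia); have := hNc n ltac:(lia).
rewrite /R_dist /Rdist; split_Rabs; lra.
Qed.

Lemma pow_le1 (x : R) (k : nat) : 0 <= x <= 1 -> x ^ k <= 1.
Proof. by move=> x01; rewrite -(pow1 k); apply: pow_incr. Qed.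

Lemma Un_cv_pow_0 (u : nat -> R) (k : nat) : Un_cv u 0 -> Un_cv (fun n => u n ^ k.+1) 0.
Proof.
move=> cvu eps heps; have [N hN] := cvu (Rmin 1 eps) (Rmin_pos _ _ Rlt_0_1 heps).
exists N => n /hN; rewrite /R_dist /Rdist !Rminus_0_r -RPow_abs => un_small.
have := Rmin_l 1 eps; have := Rmin_r 1 eps => *.
have le1 : Rabs (u n) ^ k <= 1 by apply: pow_le1; split; [apply: Rabs_pos | lra].
by apply: Rle_lt_trans (Rmult_le_compat_l _ _ _ (Rabs_pos _) le1) _; lra.
Qed.

Lemma cv_infty_pow (u : nat -> R) (k : nat) : cv_infty u -> cv_infty (fun n => u n ^ k.+1).
Proof.
move=> cvu M; have [N hN] := cvu (Rmax 1 M); exists N => n /hN un_big.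
have := Rmax_l 1 M; have := Rmax_r 1 M => *.
have : u n ^ 1 <= u n ^ k.+1 by apply: Rle_pow => //; [lra | lia].
rewrite pow_1; lra.
Qed.

Lemma cv_infty_scal (c : R) (u : nat -> R) : 0 < c -> cv_infty u -> cv_infty (fun n => c * u n).
Proof.
move=> c_gt0 cvu M; have [N hN] := cvu (M / c); exists N => n /hN un_big.
have := Rmult_lt_compat_l c _ _ c_gt0 un_big; rewrite /Rdiv.
by rewrite (Rmult_comm M) -Rmult_assoc Rinv_r ?Rmult_1_l //; lra.
Qed.

Lemma cv_infty_exp_opp (u : nat -> R) : cv_infty u -> Un_cv (fun n => exp (- u n)) 0.
Proof.
move=> cvu eps heps; have [N hN] := cvu (- ln eps); exists N => n /hN un_big.
rewrite /R_dist /Rdist Rminus_0_r Rabs_pos_eq; last exact/Rlt_le/exp_pos.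
by rewrite -(exp_ln eps heps); apply: exp_increasing; lra.
Qed.

Lemma Bernoulli_ineq (q : R) (n : nat) : 0 <= q <= 1 -> 1 - INR n * q <= (1 - q) ^ n.
Proof.
move=> q01; elim: n => [|n IH]; first by rewrite /=; lra.
rewrite S_INR /=; have := pos_INR n; nra.
Qed.

Lemma pow_1_sub_le_exp (q : R) (n : nat) : q <= 1 -> (1 - q) ^ n <= exp (- (q * INR n)).
Proof.
move=> q_le1; have -> : - (q * INR n) = - q * INR n by ring.
elim: n => [|n IH]; first by rewrite Rmult_0_r exp_0 /=; lra.
rewrite S_INR Rmult_plus_distr_l Rmult_1_r exp_plus /= Rmult_comm.
have := exp_ineq1_le (- q).
apply: Rmult_le_compat => //; [apply: pow_le | ]; lra.
Qed.

Lemma exp_le_compat (x y : R) : x <= y -> exp x <= exp y.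
Proof. by case/Rle_lt_or_eq_dec => [/exp_increasing/Rlt_le | ->]; [| exact: Rle_refl]. Qed.

Lemma Rpower_inv_pow (x : R) (k : nat) : 0 < x -> Rpower x (/ INR k.+1) ^ k.+1 = x.
Proof.
move=> x_gt0; have k_pos : 0 < INR k.+1 by apply: lt_0_INR; lia.
rewrite -Rpower_pow; last exact: exp_pos.
by rewrite Rpower_mult Rinv_l ?Rpower_1 //; lra.
Qed.

Lemma Rpower_scaled_pow (q : R) (n k : nat) : (0 < n)%nat ->
  (q * Rpower (INR n) (/ INR k.+1)) ^ k.+1 = INR n * q ^ k.+1.
Proof.
move=> n_gt0; rewrite Rpow_mult_distr Rpower_inv_pow; first exact: Rmult_comm.
apply: lt_0_INR; lia.
Qed.

Section NoFullNode.

Variables (p : nat -> R) (k : nat).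
Hypothesis p01 : forall n, 0 <= p n <= 1.

Let q01 n : 0 <= p n ^ k.+1 <= 1.
Proof. by have := p01 n; split; [apply: pow_le | apply: pow_le1]; lra. Qed.

Lemma Un_cv_no_full_1 :
  Un_cv (fun n => p n * Rpower (INR n) (/ INR k.+1)) 0 ->
  Un_cv (fun n => (1 - p n ^ k.+1) ^ n) 1.
Proof.
move=> cv0; apply: (Un_cv_squeeze (N := 1%nat) (c := fun _ => 1)
  (a := fun n => 1 - (p n * Rpower (INR n) (/ INR k.+1)) ^ k.+1)).
- move=> n n_gt0; rewrite Rpower_scaled_pow //; have := q01 n => ?.
  by split; [exact: Bernoulli_ineq | apply: pow_le1; lra].
- by have := CV_minus _ _ _ _ (Un_cv_const 1) (Un_cv_pow_0 k cv0); rewrite Rminus_0_r.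
- exact: Un_cv_const.
Qed.

Lemma Un_cv_no_full_0 (K : nat -> nat) (c : R) (N : nat) :
  0 < c -> (forall n, (N <= n)%nat -> c * INR n <= INR (K n)) ->
  cv_infty (fun n => p n * Rpower (INR n) (/ INR k.+1)) ->
  Un_cv (fun n => (1 - p n ^ k.+1) ^ K n) 0.
Proof.
move=> c_gt0 K_big cvinf; apply: (Un_cv_squeeze (N := maxn N 1) (a := fun _ => 0)
  (c := fun n => exp (- (c * (p n * Rpower (INR n) (/ INR k.+1)) ^ k.+1)))).
- move=> n n_big; have := q01 n => ?.
  split; first by apply: pow_le; lra.
  have q_le1 : p n ^ k.+1 <= 1 by lra.
  apply: Rle_trans (pow_1_sub_le_exp (K n) q_le1) (exp_le_compat _).
  rewrite Rpower_scaled_pow; last lia.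
  have := Rmult_le_compat_l _ _ _ (proj1 (q01 n)) (K_big n ltac:(lia)); lra.
- exact: Un_cv_const.
- exact: cv_infty_exp_opp (cv_infty_scal c_gt0 (cv_infty_pow k cvinf)).
Qed.

End NoFullNode.

Lemma pick_msg_None (l : nat) (M : Type) (g : 'I_l -> option M) :
  (forall j, g j = None) -> pick_msg g = None.
Proof. by move=> gN; rewrite /pick_msg; elim: (enum _) => //= j s ->; rewrite gN. Qed.

Lemma pick_msg_Some (l : nat) (M : Type) (g : 'I_l -> option M) (m : M) (j0 : 'I_l) :
  (forall j, g j = None \/ g j = Some m) -> g j0 = Some m -> pick_msg g = Some m.
Proof.
move=> gm gj0; rewrite /pick_msg; have : j0 \in enum 'I_l by rewrite mem_enum.
elim: (enum _) => //= j s IH; rewrite inE => /orP [/eqP <- | /IH ->]; first by rewrite gj0.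
by case: (gm j) => ->.
Qed.

Section Reinforcement.

Variables (V : finType) (S M I : Type) (l : nat) (G : rel V) (A : algorithm V S M I).

(* Induction on rounds: every message a copy of [w] actually delivers is the fault-free
   message of [w], and the live copy of [w] does deliver one. *)
Lemma strongly_simulates_of_live_copies (F : {set V * 'I_l}) :
  (forall v, exists i, (v, i) \notin F) -> strongly_simulates G A F.
Proof.
move=> live inp om r; elim: r => [|r IH] x //=.
congr (alg_update _ _ _ _); first exact: IH.
apply: functional_extensionality => w; rewrite /reinf_graph /= andbF andbT.
case: (boolP (G w x.1)) => Gwx /=; last exact: pick_msg_None.
have [i Fi] := live w.
apply: (pick_msg_Some (j0 := i)) => [j | ]; last by rewrite (negbTE Fi) IH.
by case: (_ && _); [left | right; rewrite IH].
Qed.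

End Reinforcement.

(* Each node records the set of nodes it heard from in the last round; a node all of
   whose copies are silenced is then detected by the copies of its out-neighbours. *)
Definition listener (V : finType) : algorithm V (V -> bool) unit unit :=
  Algorithm (fun _ _ => false) (fun _ _ _ => tt) (fun _ _ rcv _ u => isSome (rcv u)).

Lemma listener_not_simulated (V : finType) (l : nat) (G : rel V)
    (F : {set V * 'I_l.+1}) (v w : V) :
  G v w -> (forall i, (v, i) \in F) -> ~ strongly_simulates G (listener V) F.
Proof.
move=> Gvw fullv /(_ (fun _ _ => tt) (fun _ _ _ => true) 1%N (w, ord0)) /=.
move=> /(congr1 (fun st => st v)); rewrite /exec /= Gvw andbF pick_msg_None //.
by move=> j; rewrite fullv andbF.
Qed.

Lemma no_full_node_iff (V I : finType) (G : rel V) (F : {set V * I}) :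
  (~ exists v, (exists w, G v w) /\ forall i, (v, i) \in F) <->
  (forall v, v \in [set v | [exists w, G v w]] -> exists i, (v, i) \notin F).
Proof.
split=> [noFull v | live [v [[w Gvw] fullv]]].
  rewrite inE => /existsP [w Gvw]; apply: NNPP => allIn; apply: noFull.
  exists v; split; first by exists w.
  by move=> i; apply: NNPP => notIn; apply: allIn; exists i; apply/negP.
have [|i] := live v; last by rewrite fullv.
by rewrite inE; apply/existsP; exists w.
Qed.

Theorem theorem4 (f : nat) (G : forall n : nat, rel 'I_n) (p : nat -> R)
  (hp : forall n, (0 <= p n <= 1)) :
  (* (a) p = o(n^{-1/(f+1)}) *)
  (Un_cv (fun n => p n * Rpower (INR n) (/ INR f.+1)) 0 ->
     Un_cv (fun n => prob (p n)
              (fun F : {set ('I_n * 'I_f.+1)%type} => forall v, exists i, (v, i) \notin F))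
           1
  /\ forall (S M I : nat -> Type) (A : forall n, algorithm 'I_n (S n) (M n) (I n)),
       Un_cv (fun n => prob (p n)
                (fun F : {set ('I_n * 'I_f.+1)%type} => strongly_simulates (G n) (A n) F))
             1)
  /\
  (* (b) Omega(n) nodes with non-zero outdegree and p = omega(n^{-1/(f+1)}) *)
  ((exists c : R, (0 < c) /\ exists N : nat, forall n : nat, (N <= n)%N ->
       (c * INR n <= INR #|[set v : 'I_n | [exists w, G n v w]]|)) ->
   cv_infty (fun n => p n * Rpower (INR n) (/ INR f.+1)) ->
     Un_cv (fun n => prob (p n)
              (fun F : {set ('I_n * 'I_f.+1)%type} =>
                 exists v, (exists w, G n v w) /\ forall i, (v, i) \in F))
           1
  /\ exists (S M I : nat -> Type) (A : forall n, algorithm 'I_n (S n) (M n) (I n)),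
       ~ Un_cv (fun n => prob (p n)
                  (fun F : {set ('I_n * 'I_f.+1)%type} => strongly_simulates (G n) (A n) F))
               1).
Proof.
split=> [cv0 | [c [c_gt0 [N K_big]]] cvinf].
  have no_full n : prob (p n) (fun F : {set 'I_n * 'I_f.+1} =>
      forall v, exists i, (v, i) \notin F) = (1 - p n ^ f.+1) ^ n.
    have := prob_no_full_slice (p n) 'I_f.+1 [set: 'I_n].
    rewrite cardsT !card_ord => <-; apply: eq_prob => F.
    by split=> live v; [move=> _; apply: live | apply: live; rewrite in_setT].
  have cv1 := Un_cv_no_full_1 hp cv0.
  split; first by rewrite (functional_extensionality _ _ no_full).
  move=> S M I A; apply: (Un_cv_squeeze (N := 0) _ cv1 (Un_cv_const 1)) => n _.
  rewrite -no_full; split; last exact: prob_le1.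
  exact/prob_le/strongly_simulates_of_live_copies.
pose W n := [set v : 'I_n | [exists w, G n v w]].
have no_full n : prob (p n) (fun F : {set 'I_n * 'I_f.+1} =>
    ~ exists v, (exists w, G n v w) /\ forall i, (v, i) \in F) = (1 - p n ^ f.+1) ^ #|W n|.
  have := prob_no_full_slice (p n) 'I_f.+1 (W n).
  rewrite card_ord => <-; exact/eq_prob/no_full_node_iff.
have cv0 := Un_cv_no_full_0 hp (K := fun n => #|W n|) c_gt0 K_big cvinf.
split.
  have some_full n : prob (p n) (fun F : {set 'I_n * 'I_f.+1} =>
      exists v, (exists w, G n v w) /\ forall i, (v, i) \in F)
      = 1 - (1 - p n ^ f.+1) ^ #|W n|.
    by rewrite -no_full -prob_Not; apply: eq_prob => F; split=> [? [] | /NNPP].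
  rewrite (functional_extensionality _ _ some_full).
  by have := CV_minus _ _ _ _ (Un_cv_const 1) cv0; rewrite Rminus_0_r.
exists (fun n => 'I_n -> bool), (fun=> unit), (fun=> unit), (fun n => listener 'I_n) => cv1.
suff : 1 <= 0 by lra.
apply: (Rle_cv_lim _ cv1 cv0) => n; rewrite -no_full.
apply: (prob_le (hp n)) => F sim [v [[w Gvw] fullv]].
exact: listener_not_simulated Gvw fullv sim.
Qed.
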